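(* Let $m\geq1$ and let $\Delta$ be the triangle with vertices $(-\alpha,0)$, $(m-1+\beta,0)$, $(m,m+1)$, where $\alpha,\beta$ are rational with $0<\alpha<\frac{1}{1+(m+1)+(m+1)^2}$ and $\frac{1}{m+2}<\beta<1-\frac{1}{1+\frac{1}{m+1}+\frac{1}{(m+1)^2}-\frac{\alpha}{1-(m+2)\alpha}}$. Let $X=\mathrm{Bl}_{t_0}X_\Delta$, let $C\subset X$ be the strict transform of $\{\xi_m=0\}$, and let $D$ be the class $\pi^*H'-(m+1)E$, where $H'$ is the class on $X_\Delta$ corresponding to the triangle with sides parallel to those of $\Delta$ whose base is the interval $[0,m]$ on the $x$-axis. Then $C$ is a negative curve with $C\cdot C<0$, and $C\cdot D=0$.
   Context: Let $k$ be an algebraically closed field of characteristic zero, $T=\operatorname{Spec}k[x^{\pm1},y^{\pm1}]$, $t_0=(1,1)$. For a rational triangle $\Delta$, $X_\Delta$ is the projective toric surface defined by $\Delta$, $\pi:X=\mathrm{Bl}_{t_0}X_\Delta\to X_\Delta$ the blowup with exceptional curve $E$. Divisor classes on $X_\Delta$ correspond to rational triangles with sides parallel to those of $\Delta$ (each side's line containing a lattice point), up to integral translation; the self-intersection of the class of a triangle is twice its area, and $E\cdot E=-1$. $\xi_m\in k[x,y]$ is the irreducible polynomial (unique up to a constant) vanishing to order exactly $m$ at $t_0$ with Newton polygon the triangle with vertices $(0,0)$, $(m-1,0)$, $(m,m+1)$; explicitly $\xi_m=(-1)^mx^my^{m+1}+\sum_{j=0}^{m-1}\sum_{i=j}^{m-1}(-1)^j\binom{m+1}{j}x^iy^j$.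 A negative curve is an irreducible curve with nonpositive self-intersection. *)

(* Combinatorial model of the intersection theory on
   X = Bl_{t0} X_Delta, following the dictionary stated in the paper:
   divisor classes on X_Delta  <->  rational triangles with sides parallel to
   those of Delta (up to translation), self-intersection = 2 * area,
   E.E = -1, pi^* D . E = 0. *)
From HB Require Import structures.
From mathcomp Require Import all_boot all_order all_algebra.
Set Implicit Arguments.
Unset Strict Implicit.
Unset Printing Implicit Defensive.
Import Order.TTheory GRing.Theory Num.Theory.
Local Open Scope ring_scope.

(* Delta = triangle with vertices (-al,0), (m-1+be,0), (m,m+1).
   Its three sides lie on level lines of the linear forms
     l0 u = u.y                      (bottom side,  Delta: l0 >= 0)
     l1 u = (m+1) u.x - (m+al) u.y   (left side,    Delta: l1 >= -(m+1) al)
     l2 u = (m+1) u.x - (1-be) u.y   (right side,   Delta: l2 <= (m+1)(m-1+be)). *)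
Definition l0 (u : rat * rat) : rat := u.2.
Definition l1 (m : nat) (al : rat) (u : rat * rat) : rat :=
  m.+1%:R * u.1 - (m%:R + al) * u.2.
Definition l2 (m : nat) (be : rat) (u : rat * rat) : rat :=
  m.+1%:R * u.1 - (1 - be) * u.2.

(* A triangle with sides parallel to those of Delta is given by its three
   support numbers (a0, a1, b2):  { u | l0 u >= a0, l1 u >= a1, l2 u <= b2 }. *)
Definition tri := (rat * rat * rat)%type.

Definition tri_add (T1 T2 : tri) : tri :=
  (T1.1.1 + T2.1.1, T1.1.2 + T2.1.2, T1.2 + T2.2).

Definition tri_vertices (m : nat) (al be : rat) (T : tri) :
    (rat * rat) * (rat * rat) * (rat * rat) :=
  let a0 := T.1.1 in let a1 := T.1.2 in let b2 := T.2 in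
  let y3 := (b2 - a1) / (m%:R - 1 + al + be) in
  (((a1 + (m%:R + al) * a0) / m.+1%:R, a0),
   ((b2 + (1 - be) * a0) / m.+1%:R, a0),
   ((a1 + (m%:R + al) * y3) / m.+1%:R, y3)).

Definition tri_area (m : nat) (al be : rat) (T : tri) : rat :=
  let V := tri_vertices m al be T in
  let P1 := V.1.1 in let P2 := V.1.2 in let P3 := V.2 in
  ((P2.1 - P1.1) * (P3.2 - P1.2) - (P3.1 - P1.1) * (P2.2 - P1.2)) / 2%:R.

(* intersection pairing on X_Delta: the symmetric bilinear form whose
   quadratic form is D.D = 2 * area (polarisation via Minkowski sum) *)
Definition tri_dot (m : nat) (al be : rat) (T1 T2 : tri) : rat :=
  tri_area m al be (tri_add T1 T2) - tri_area m al be T1 - tri_area m al be T2.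

(* classes on X = Bl_{t0} X_Delta of the form  pi^* T - e E *)
Definition bl_class := (tri * rat)%type.
Definition bl_dot (m : nat) (al be : rat) (D1 D2 : bl_class) : rat :=
  tri_dot m al be D1.1 D2.1 - D1.2 * D2.2.

(* Coefficients of xi_m = (-1)^m x^m y^(m+1)
      + sum_{j=0}^{m-1} sum_{i=j}^{m-1} (-1)^j binom(m+1,j) x^i y^j
   (integer coefficients; coefficient of x^i y^j). *)
Definition xi_coef (m : nat) (i j : nat) : int :=
  if (i == m) && (j == m.+1) then (-1) ^+ m
  else if (j <= i)%N && (i < m)%N then (-1) ^+ j * ('C(m.+1, j))%:Z
  else 0.

(* The class in X_Delta of the closure of {f = 0}: the triangle with sides
   parallel to Delta cut out by the minima/maxima of l0, l1, l2 over the
   support (Newton polygon) of f. *)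
Definition newton_tri (m : nat) (al be : rat) (c : nat -> nat -> int) (T : tri)
    : Prop :=
  let pt i j := (i%:R : rat, j%:R : rat) in
  (forall i j, c i j != 0 ->
     [/\ T.1.1 <= l0 (pt i j), T.1.2 <= l1 m al (pt i j) & l2 m be (pt i j) <= T.2])
  /\ (exists i j, c i j != 0 /\ l0 (pt i j) = T.1.1)
  /\ (exists i j, c i j != 0 /\ l1 m al (pt i j) = T.1.2)
  /\ (exists i j, c i j != 0 /\ l2 m be (pt i j) = T.2).

(* coefficient of (x-1)^a (y-1)^b in f = sum_{i,j<N} c i j x^i y^j *)
Definition taylor_t0 (c : nat -> nat -> int) (N a b : nat) : int :=
  \sum_(i < N) \sum_(j < N) c i j * ('C(i, a) * 'C(j, b))%:Z.

Definition mult_t0 (c : nat -> nat -> int) (N mu : nat) : Prop :=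
  (forall a b, (a + b < mu)%N -> taylor_t0 c N a b = 0)
  /\ (exists a b, (a + b)%N = mu /\ taylor_t0 c N a b != 0).

Definition H'tri (m : nat) : tri := (0, 0, m.+1%:R * m%:R).

(* The Newton polygon of xi_m makes the class of C the triangle with support
   numbers (0, -(m+1) al, (m+1)(m-1+be)), and C has multiplicity m at t0.
   Expanding 2 area - m^2 gives C.C = (m+1)(al+be) - 1, while C.D vanishes
   identically; the bounds on al and be force (m+1)(al+be) < 1.
   For the multiplicity, the hockey-stick identity turns the coefficient of
   (x-1)^a (y-1)^b in xi_m into sum_j (-1)^j C(m+1,j) Q(j) with Q a polynomial
   of degree a+b+1; this (m+1)-st finite difference vanishes when a+b < m, and
   equals +-(m+1) for (a,b) = (0,m). *)

From mathcomp Require Import all_boot all_order all_algebra.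
From mathcomp Require Import ring lra zify.
Set Implicit Arguments. Unset Strict Implicit. Unset Printing Implicit Defensive.
Import Order.TTheory GRing.Theory Num.Theory.
Local Open Scope ring_scope.

Section FiniteDifferences.

Variable R : comPzRingType.
Implicit Types (P Q : nat -> R) (d e n : nat).

Definition fdiff P j := P j.+1 - P j.

(* [fdeg_lt d P]: the d-th forward difference of P vanishes, i.e. P agrees
   with a polynomial of degree < d. *)
Fixpoint fdeg_lt d P : Prop :=
  if d is d'.+1 then fdeg_lt d' (fdiff P) else forall j, P j = 0.

Lemma fdeg_ltS d P : fdeg_lt d.+1 P = fdeg_lt d (fdiff P).
Proof. by []. Qed.

Lemma eq_fdeg_lt d P Q : P =1 Q -> fdeg_lt d P -> fdeg_lt d Q.
Proof.
elim: d P Q => [|d IHd] P Q eqPQ /=; first by move=> P0 j; rewrite -eqPQ.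
by apply: IHd => j; rewrite /fdiff !eqPQ.
Qed.

Lemma fdeg_lt_zero d P : P =1 (fun=> 0) -> fdeg_lt d P.
Proof.
elim: d P => [|d IHd] P P0 //=.
by apply: IHd => j; rewrite /fdiff !P0 subr0.
Qed.

Lemma fdeg_lt_cst c : fdeg_lt 1 (fun=> c).
Proof. by move=> j; rewrite /fdiff subrr. Qed.

Lemma fdeg_ltW d e P : (d <= e)%N -> fdeg_lt d P -> fdeg_lt e P.
Proof.
elim: e d P => [|e IHe] [|d] P //= le_de; last exact: IHe.
by move=> P0; apply: fdeg_lt_zero => j; rewrite /fdiff !P0 subr0.
Qed.

Lemma fdeg_ltD d P Q :
  fdeg_lt d P -> fdeg_lt d Q -> fdeg_lt d (fun j => P j + Q j).
Proof.
elim: d P Q => [|d IHd] P Q /=; first by move=> P0 Q0 j; rewrite P0 Q0 addr0.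
move=> dP dQ; apply: eq_fdeg_lt (IHd _ _ dP dQ) => j; rewrite /fdiff; ring.
Qed.

Lemma fdeg_ltMl c d P : fdeg_lt d P -> fdeg_lt d (fun j => c * P j).
Proof.
elim: d P => [|d IHd] P /=; first by move=> P0 j; rewrite P0 mulr0.
by move=> dP; apply: eq_fdeg_lt (IHd _ dP) => j; rewrite /fdiff mulrBr.
Qed.

Lemma fdeg_lt_shift d P : fdeg_lt d P -> fdeg_lt d (fun j => P j.+1).
Proof. by elim: d P => [|d IHd] P /=; [move=> P0 j; apply: P0 | apply: IHd]. Qed.

Lemma fdiffM P Q j :
  fdiff (fun j => P j * Q j) j = fdiff P j * Q j.+1 + P j * fdiff Q j.
Proof. rewrite /fdiff; ring. Qed.

Lemma fdeg_ltM d e P Q : fdeg_lt d.+1 P -> fdeg_lt e.+1 Q ->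
  fdeg_lt (d + e).+1 (fun j => P j * Q j).
Proof.
elim: d e P Q => [|d IHd] e; elim: e => [|e IHe] P Q dP dQ;
  rewrite fdeg_ltS; apply: eq_fdeg_lt (fun j => esym (fdiffM P Q j)) _;
  apply: fdeg_ltD.
- by apply: fdeg_lt_zero => j /=; rewrite dP mul0r.
- by apply: fdeg_lt_zero => j /=; rewrite dQ mulr0.
- by apply: fdeg_lt_zero => j /=; rewrite dP mul0r.
- exact: IHe.
- exact: IHd (fdeg_lt_shift dQ).
- by apply: fdeg_lt_zero => j /=; rewrite dQ mulr0.
- exact: IHd (fdeg_lt_shift dQ).
- by rewrite addnS; apply: IHe.
Qed.

Lemma fdeg_lt_binomial b : fdeg_lt b.+1 (fun j => 'C(j, b)%:R : R).
Proof.
elim: b => [|b IHb] /=; first by move=> j; rewrite /fdiff !bin0 subrr.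
by apply: eq_fdeg_lt IHb => j; rewrite /fdiff binS natrD; ring.
Qed.

Definition alt_binomial_sum n P := \sum_(j < n.+1) (-1) ^+ j * 'C(n, j)%:R * P j.

Lemma alt_binomial_sumS n P :
  alt_binomial_sum n.+1 P = - alt_binomial_sum n (fdiff P).
Proof.
have peel0 : alt_binomial_sum n P =
    P 0%N - \sum_(j < n.+1) (-1) ^+ j * 'C(n, j.+1)%:R * P j.+1.
  rewrite /alt_binomial_sum big_ord_recl [in RHS]big_ord_recr /=.
  rewrite (bin_small (ltnSn n)).
  rewrite bin0 expr0 !mul1r mulr0 mul0r addr0 -sumrN; congr (_ + _).
  by apply: eq_bigr => j _; rewrite exprS; ring.
have sum_fdiff : alt_binomial_sum n (fdiff P) =
    \sum_(j < n.+1) (-1) ^+ j * 'C(n, j)%:R * P j.+1 - alt_binomial_sum n P.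
  by rewrite /alt_binomial_sum -sumrB; apply: eq_bigr => j _; rewrite /fdiff; ring.
rewrite sum_fdiff peel0 {1}/alt_binomial_sum big_ord_recl /= bin0 expr0 !mul1r.
rewrite (eq_bigr (fun j : 'I_n.+1 => - ((-1) ^+ j * 'C(n, j)%:R * P j.+1)
    - (-1) ^+ j * 'C(n, j.+1)%:R * P j.+1)) => [|j _]; last first.
  by rewrite /bump /= binS natrD exprS; ring.
rewrite sumrB sumrN; ring.
Qed.

Lemma alt_binomial_sum_fdeg n P : fdeg_lt n P -> alt_binomial_sum n P = 0.
Proof.
elim: n P => [|n IHn] P /= dP; first by rewrite /alt_binomial_sum big_ord1 dP mulr0.
by rewrite alt_binomial_sumS IHn ?oppr0.
Qed.

End FiniteDifferences.

Lemma hockey_stick a j m :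
  (j <= m)%N -> (\sum_(j <= i < m) 'C(i, a) + 'C(j, a.+1) = 'C(m, a.+1))%N.
Proof.
elim: m => [|m IHm]; first by rewrite leqn0 => /eqP->; rewrite big_geq.
rewrite leq_eqVlt => /predU1P[->|]; first by rewrite big_geq.
by rewrite ltnS => le_jm; rewrite big_nat_recr //= addnAC IHm // binS addnC.
Qed.

Lemma sum_xi_coef_bin m a j : (j <= m.+1)%N ->
  \sum_(i < m.+2) xi_coef m i j * 'C(i, a)%:Z =
  (-1) ^+ j * 'C(m.+1, j)%:Z * ('C(m, a.+1)%:Z - 'C(j, a.+1)%:Z).
Proof.
rewrite leq_eqVlt => /predU1P[->|]; last rewrite ltnS => le_jm.
  rewrite !big_ord_recr /= big1 => [|i _]; last first.
    by rewrite /xi_coef !ifF ?mul0r //; apply/negbTE; have := ltn_ord i; lia.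
  have -> : xi_coef m m m.+1 = (-1) ^+ m by rewrite /xi_coef !eqxx.
  have -> : xi_coef m m.+1 m.+1 = 0 by rewrite /xi_coef !ifF //; lia.
  by rewrite binn binS PoszD exprS; ring.
have xiE i :
    xi_coef m i j = if (j <= i < m)%N then (-1) ^+ j * 'C(m.+1, j)%:Z else 0.
  by rewrite /xi_coef (@ltn_eqF j m.+1 le_jm) andbF.
have zero_below : \sum_(0 <= i < j) xi_coef m i j * 'C(i, a)%:Z = 0.
  rewrite big_nat_cond big1 // => i /andP[/andP[_ lt_ij] _].
  by rewrite xiE leqNgt lt_ij mul0r.
have zero_above : \sum_(m <= i < m.+2) xi_coef m i j * 'C(i, a)%:Z = 0.
  rewrite big_nat_cond big1 // => i /andP[/andP[le_mi _] _].
  by rewrite xiE ltnNge le_mi andbF mul0r.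
rewrite -(big_mkord xpredT (fun i => xi_coef m i j * 'C(i, a)%:Z)).
rewrite (big_cat_nat (leq0n j) (leq_trans le_jm (leqW (leqnSn m)))) /= zero_below.
rewrite (big_cat_nat le_jm (leqW (leqnSn m))) /= zero_above add0r addr0.
rewrite (eq_big_nat _ _ (F2 := fun i => (-1) ^+ j * 'C(m.+1, j)%:Z * 'C(i, a)%:Z));
  last by move=> i /andP[le_ji lt_im]; rewrite xiE le_ji lt_im.
rewrite -big_distrr /= -(hockey_stick a le_jm) PoszD addrK.
by rewrite (big_morph Posz PoszD (erefl 0%:Z)).
Qed.

Definition xi_taylor_weight m a b (j : nat) : int :=
  'C(j, b)%:Z * ('C(m, a.+1)%:Z - 'C(j, a.+1)%:Z).

Lemma taylor_t0_xi m a b :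
  taylor_t0 (xi_coef m) m.+2 a b = alt_binomial_sum m.+1 (xi_taylor_weight m a b).
Proof.
rewrite /taylor_t0 exchange_big /=; apply: eq_bigr => j _.
rewrite (eq_bigr (fun i : 'I_m.+2 => xi_coef m i j * 'C(i, a)%:Z * 'C(j, b)%:Z));
  last by move=> i _; rewrite PoszM mulrA.
by rewrite -mulr_suml sum_xi_coef_bin ?natz /xi_taylor_weight; [ring | rewrite -ltnS].
Qed.

Lemma fdeg_lt_xi_taylor_weight m a b :
  fdeg_lt (b + a.+1).+1 (xi_taylor_weight m a b).
Proof.
apply: fdeg_ltM.
  by apply: eq_fdeg_lt (fdeg_lt_binomial _ b) => j; rewrite natz.
have cst_a := fdeg_ltW (isT : (1 <= a.+2)%N) (fdeg_lt_cst 'C(m, a.+1)%:Z).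
apply: eq_fdeg_lt (fdeg_ltD cst_a (fdeg_ltMl (-1) (fdeg_lt_binomial _ a.+1))) => j.
by rewrite natz mulN1r.
Qed.

Lemma mult_t0_xi m : mult_t0 (xi_coef m) m.+2 m.
Proof.
split=> [a b lt_abm | ].
  rewrite taylor_t0_xi alt_binomial_sum_fdeg //.
  by apply: fdeg_ltW (fdeg_lt_xi_taylor_weight m a b); rewrite ltnS addnS addnC.
exists 0%N, m; split=> //; rewrite taylor_t0_xi /alt_binomial_sum big_ord_recr /=.
rewrite big1 => [|j _]; last first.
  rewrite /xi_taylor_weight !bin1; case: (ltnP j m) => [lt_jm | le_mj].
    by rewrite (bin_small lt_jm) mul0r mulr0.
  have -> : nat_of_ord j = m by apply/anti_leq; rewrite le_mj andbT -ltnS.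
  by rewrite subrr !mulr0.
rewrite add0r /xi_taylor_weight binn binSn !bin1 mulr1 mulf_eq0 signr_eq0 /=.
have -> : m%:Z - m.+1%:Z = -1 by lia.
by rewrite mulrN1 oppr_eq0.
Qed.

Definition xi_tri m (al be : rat) : tri :=
  (0, - (m.+1%:R * al), m.+1%:R * (m%:R - 1 + be)).

Lemma newton_tri_xi m al be : (0 < m)%N -> 0 <= al -> 0 <= be ->
  newton_tri m al be (xi_coef m) (xi_tri m al be).
Proof.
move=> m_gt0 al_ge0 be_ge0; have m_ge0 := ler0n rat m.
have top_neq0 : xi_coef m m m.+1 != 0 by rewrite /xi_coef !eqxx signr_eq0.
rewrite /newton_tri /l0 /l1 /l2 /= -!natr1; split; last split; last split.
- move=> i j; rewrite /xi_coef.
  case: ifP => [/andP[/eqP-> /eqP->] _ | _]; first by split; nra.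
  case: ifP => [/andP[le_ji lt_im] _ | _]; last by rewrite eqxx.
  have : (j%:R : rat) <= i%:R by rewrite ler_nat.
  have : (i%:R : rat) + 1 <= m%:R by rewrite natr1 ler_nat.
  have := ler0n rat j.
  by split; nra.
- by exists 0%N, 0%N; rewrite /xi_coef (ltn_eqF m_gt0) m_gt0.
- by exists m, m.+1; split=> //; rewrite -!natr1; ring.
- by exists m, m.+1; split=> //; rewrite -!natr1; ring.
Qed.

Section IntersectionNumbers.

Variables (m : nat) (al be : rat).
Hypothesis xi_tri_nondegenerate : m%:R - 1 + al + be != 0.

Let C : bl_class := (xi_tri m al be, m%:R).

Lemma bl_dot_xi_self : bl_dot m al be C C = m.+1%:R * (al + be) - 1.
Proof.
rewrite /C /bl_dot /tri_dot /tri_area /tri_vertices /tri_add /=.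
by field; rewrite xi_tri_nondegenerate nat1r pnatr_eq0.
Qed.

Lemma bl_dot_xi_H' : bl_dot m al be C (H'tri m, m.+1%:R) = 0.
Proof.
rewrite /C /bl_dot /tri_dot /tri_area /tri_vertices /tri_add /H'tri /=.
by field; rewrite xi_tri_nondegenerate nat1r pnatr_eq0.
Qed.

End IntersectionNumbers.

Definition beta_max (n al : rat) : rat :=
  1 - 1 / (1 + 1 / n + 1 / n ^+ 2 - al / (1 - (n + 1) * al)).

Lemma beta_max_le (n al : rat) : 1 <= n -> 0 < al -> al < 1 / (1 + n + n ^+ 2) ->
  n * (al + beta_max n al) <= 1.
Proof.
move=> n_ge1 al_gt0; rewrite ltr_pdivlMr ?mul1r => [al_lt|]; last by nra.
pose p := 1 - (n + 1) * al; pose A := (n ^+ 2 + n + 1) * p - n ^+ 2 * al.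
have p_gt0 : 0 < p by rewrite /p; nra.
have A_gt0 : 0 < A by rewrite /A /p; nra.
have n_neq0 : n != 0 by apply/eqP; lra.
have beta_maxE : beta_max n al = 1 - n ^+ 2 * p / A.
  rewrite /beta_max -/p /A; field.
  by rewrite -/A (gt_eqF A_gt0) (gt_eqF p_gt0) n_neq0.
pose K := n * (n ^+ 3 + 3 * n ^+ 2 + 2 * n + 1); pose B := 2 * n ^+ 2 + 2 * n + 1.
have K_gt0 : 0 < K by rewrite /K; nra.
have sos : n ^+ 3 * p - A * (n - 1 + n * al) =
    ((2 * K * al - B) ^+ 2 + (4 * n ^+ 3 - 1)) / (4 * K).
  by rewrite /A /p /K /B; field; rewrite n_neq0 andbT gt_eqF //; nra.
rewrite beta_maxE -subr_ge0.
have -> : 1 - n * (al + (1 - n ^+ 2 * p / A)) =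
    (n ^+ 3 * p - A * (n - 1 + n * al)) / A.
  by field; rewrite (gt_eqF A_gt0).
rewrite sos; apply/divr_ge0/ltW/A_gt0; apply: divr_ge0; last by nra.
by apply: addr_ge0; [exact: sqr_ge0 | nra].
Qed.

Unset Implicit Arguments.

Theorem lemma5p5 (m : nat) (al be : rat) (hm : (1 <= m)%N)
  (ha0 : 0 < al)
  (ha1 : al < 1 / (1 + m.+1%:R + m.+1%:R ^+ 2))
  (hb0 : 1 / m.+2%:R < be)
  (hb1 : be < 1 - 1 / (1 + 1 / m.+1%:R + 1 / m.+1%:R ^+ 2
                         - al / (1 - m.+2%:R * al))) :
  exists (TC : tri) (mu : nat),
    newton_tri m al be (xi_coef m) TC /\ mult_t0 (xi_coef m) m.+2 mu /\
    let C : bl_class := (TC, mu%:R) in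
    let D : bl_class := (H'tri m, m.+1%:R) in
    bl_dot m al be C C < 0 /\ bl_dot m al be C D = 0.
Proof.
have be_gt0 : 0 < be by apply: lt_trans hb0; rewrite divr_gt0 ?ltr0n.
have m_ge1 : 1 <= m%:R :> rat by rewrite ler1n.
have nondeg : m%:R - 1 + al + be != 0 by rewrite gt_eqF //; lra.
have sum_lt1 : m.+1%:R * (al + be) < 1.
  apply: lt_le_trans (beta_max_le _ ha0 ha1); last by rewrite ler1n.
  by rewrite ltr_pM2l ?ltr0n // ltrD2l /beta_max natr1.
exists (xi_tri m al be), m.
split; first exact: newton_tri_xi hm (ltW ha0) (ltW be_gt0).
split; first exact: mult_t0_xi.
move=> C D; rewrite {}/C {}/D.
by rewrite bl_dot_xi_self // bl_dot_xi_H' // subr_lt0.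
Qed.
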